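(* As formal power series in $w,x,y,z$, $$Q(w,x,y,z):=\sum_{k\ge1}\sum_{j=0}^k\sum_{a=0}^jq_{k,j,a}(w)\,x^ky^jz^a=\frac{xy\,(-w^2x^2+wx^2z+wx^2+2wx+z)}{(wx^2y+wx^2+xyz+wx-x-1)(wx-1)(x+1)}.$$
   Context: For $k\ge1$ and a nonempty $S=\{s_1<\dots<s_j\}\subseteq[k]$, define $p_1(S)=s_2-s_1,\dots,p_{j-1}(S)=s_j-s_{j-1}$, $p_j(S)=k+s_1-s_j$. For $1\le j\le k$ and $0\le a\le j$ define $$q_{k,j,a}(x)=\sum_{S\subseteq[k],\,|S|=j}\ \sum_{A\subseteq[j],\,|A|=a}\ \prod_{i=1}^j\Big(\sum_{b=0}^{p_i(S)-1}(-1)^{p_i(S)-1-b}x^b+(-1)^{p_i(S)}\mathbf 1\{i\notin A\}\Big),$$ and set $q_{k,0,0}=0$ and $q_{k,j,a}=0$ when $a>j$. *)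

From mathcomp Require Import all_boot all_order all_algebra.
Set Implicit Arguments. Unset Strict Implicit. Unset Printing Implicit Defensive.
Import GRing.Theory.
Local Open Scope ring_scope.

(* Formal power series in x,y,z with coefficients in Z[w] (= {poly int},
   'X playing the role of w).  f k j a = coefficient of x^k y^j z^a. *)
Definition fps := nat -> nat -> nat -> {poly int}.

Definition fps_add (f g : fps) : fps := fun k j a => f k j a + g k j a.
Definition fps_opp (f : fps) : fps := fun k j a => - f k j a.
Definition fps_mul (f g : fps) : fps := fun k j a =>
  \sum_(i < k.+1) \sum_(l < j.+1) \sum_(m < a.+1)
     f i l m * g (k - i)%N (j - l)%N (a - m)%N.
Definition fps_mon (c : {poly int}) (k0 j0 a0 : nat) : fps := fun k j a =>
  if [&& k == k0, j == j0 & a == a0] then c else 0.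

Definition fps1 : fps := fps_mon 1 0 0 0.
Definition fpsW : fps := fps_mon 'X 0 0 0.
Definition fpsX : fps := fps_mon 1 1 0 0.
Definition fpsY : fps := fps_mon 1 0 1 0.
Definition fpsZ : fps := fps_mon 1 0 0 1.

Declare Scope fps_scope.
Delimit Scope fps_scope with F.
Notation "f + g" := (fps_add f g) : fps_scope.
Notation "f - g" := (fps_add f (fps_opp g)) : fps_scope.
Notation "- f" := (fps_opp f) : fps_scope.
Notation "f * g" := (fps_mul f g) : fps_scope.

(* S = {s_1 < ... < s_j} \subseteq [k], encoded 0-based as a subset of 'I_k
   (shifting all elements by -1 does not change the gaps p_i(S)). *)
Definition sorted_elems (k : nat) (S : {set 'I_k}) : seq nat :=
  sort leq [seq val x | x <- enum S].

(* p_{i+1}(S) for i : 0-based index, j = |S| *)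
Definition gap (k : nat) (S : {set 'I_k}) (i : nat) : nat :=
  let s := sorted_elems S in
  let j := size s in
  if (i.+1 < j)%N then (nth 0 s i.+1 - nth 0 s i)%N
  else (k + nth 0 s 0 - nth 0 s j.-1)%N.

Definition factor (p : nat) (inA : bool) : {poly int} :=
  \sum_(b < p) (-1) ^+ (p - 1 - b)%N * 'X^b + (-1) ^+ p * (~~ inA)%:R.

Definition q (k j a : nat) : {poly int} :=
  if j == 0%N then 0 else
  \sum_(S : {set 'I_k} | #|S| == j)
    \sum_(A : {set 'I_j} | #|A| == a)
      \prod_(i < j) factor (gap S i) (i \in A).

Definition Qser : fps := fun k j a =>
  if [&& (1 <= k)%N, (j <= k)%N & (a <= j)%N] then q k j a else 0.

Definition Numer : fps :=
  (fpsX * fpsY *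
   (- (fpsW * fpsW * fpsX * fpsX) + fpsW * fpsX * fpsX * fpsZ
    + fpsW * fpsX * fpsX + (fpsW + fpsW) * fpsX + fpsZ))%F.

Definition Denom : fps :=
  ((fpsW * fpsX * fpsX * fpsY + fpsW * fpsX * fpsX + fpsX * fpsY * fpsZ
    + fpsW * fpsX - fpsX - fps1) * (fpsW * fpsX - fps1) * (fpsX + fps1))%F.

From mathcomp Require Import all_boot all_order all_algebra.
From mathcomp Require Import ring zify.
Set Implicit Arguments. Unset Strict Implicit. Unset Printing Implicit Defensive.
Import GRing.Theory.

(* Put g_p := factor p false + z * factor p true.  Summing over A first, the
   x^k-coefficient of Q is T_k := \sum_(S != set0) y^|S| \prod_i g_(p_i(S)).
   Listing S in increasing order and splitting off its first gap gives
   T_k = y k g_k + y \sum_(h=1..k) g_h T_(k-h), i.e. T (1 - y G) = y x G' for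
   G := \sum_(p>=1) g_p x^p.  Since g_p = (1 + z) (w^p - (-1)^p)/(w + 1) + (-1)^p
   satisfies g_(p+2) = (w - 1) g_(p+1) + w g_p, G = x (z + w x)/((1 + x)(1 - w x)),
   and solving for T gives the rational function.  Power series identities are
   checked on polynomials truncated at x-degree N. *)

Fixpoint subseqs (T : Type) (l : seq T) : seq (seq T) :=
  if l is x :: t then [seq x :: u | u <- subseqs t] ++ subseqs t else [:: [::]].

Lemma subseqs_map (T U : Type) (f : T -> U) l :
  subseqs (map f l) = map (map f) (subseqs l).
Proof.
elim: l => [//|x t IH] /=; rewrite IH map_cat -!map_comp; congr (_ ++ _).
Qed.

Lemma mem_subseqs_iota m n s :
  (s \in subseqs (iota m n)) = sorted ltn s && all (fun x => m <= x < m + n) s.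
Proof.
apply/idP/andP => [|[]].
- elim: n m s => [|n IH] m s /=; first by rewrite inE => /eqP ->.
  rewrite mem_cat => /orP[/mapP[t /IH[st all_t] ->]|/IH[-> all_s]]; last first.
    by split=> //; apply: sub_all all_s => y /andP[? ?]; apply/andP; split; lia.
  have lt_t : all (ltn m) t by apply: sub_all all_t => y /andP[].
  split; first by rewrite /= path_sortedE ?lt_t //; exact: ltn_trans.
  rewrite /= leqnn addnS ltnS leq_addr.
  by apply: sub_all all_t => y /andP[? ?]; apply/andP; split; lia.
elim: n m s => [|n IH] m s /=.
  by case: s => [|x s] _; rewrite ?inE //= addn0; case: leqP.
rewrite mem_cat; case: s => [|x t] ss; first by rewrite orbC IH.
move=> /= /andP[/andP[mx xn] all_t].
have gt_x : all (ltn x) t by apply: order_path_min ss; exact: ltn_trans.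
have st : sorted ltn t := path_sorted ss.
have [<-|nxm] := eqVneq m x.
  apply/orP; left; apply/mapP; exists t => //; apply: IH => //.
  apply/allP => y yt; move: (allP gt_x y yt) (allP all_t y yt) => /= h1 /andP[_ h2].
  by apply/andP; split; lia.
apply/orP; right; apply: IH => //=.
have mx' : m < x by rewrite ltn_neqAle nxm.
rewrite mx' /=; apply/andP; split; first lia.
apply/allP => y yt; move: (allP gt_x y yt) (allP all_t y yt) => /= h1 /andP[_ h2].
by apply/andP; split; lia.
Qed.

Lemma uniq_subseqs_iota m n : uniq (subseqs (iota m n)).
Proof.
elim: n m => [//|n IH] m /=; rewrite cat_uniq IH andbT.
rewrite map_inj_uniq ?IH //; last by move=> ? ? [].
apply/hasPn => u; rewrite mem_subseqs_iota => /andP[_ all_u].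
by apply/mapP => -[t _ eu]; move: all_u; rewrite eu /= ltnn.
Qed.

Lemma big_subseqs_iota (R : nmodType) (F : seq nat -> R) m n :
  (\sum_(s <- subseqs (iota m n)) F s =
   F [::] + \sum_(h <- iota m n) \sum_(t <- subseqs (iota h.+1 (m + n - h.+1))) F (h :: t))%R.
Proof.
elim: n m => [|n IH] m /=; first by rewrite big_seq1 big_nil addr0.
rewrite big_cat big_map IH big_cons addrCA addnS subSS addKn addSnnS.
by rewrite addnS.
Qed.

Section SortedElems.
Variable k : nat.
Implicit Type S : {set 'I_k}.

Lemma mem_sorted_elems S (i : 'I_k) : (val i \in sorted_elems S) = (i \in S).
Proof. by rewrite /sorted_elems mem_sort mem_map ?mem_enum //; exact: val_inj. Qed.

Lemma size_sorted_elems S : size (sorted_elems S) = #|S|.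
Proof. by rewrite /sorted_elems size_sort size_map cardE. Qed.

Lemma sorted_elems_inj : injective (@sorted_elems k).
Proof. by move=> S1 S2 eS; apply/setP => i; rewrite -!mem_sorted_elems eS. Qed.

Lemma sorted_elems_ltn S : sorted ltn (sorted_elems S).
Proof.
rewrite ltn_sorted_uniq_leq sort_uniq map_inj_uniq ?enum_uniq //=; last exact: val_inj.
by apply: sort_sorted; exact: leq_total.
Qed.

Lemma sorted_elems_of_seq s : sorted ltn s -> all (fun x => x < k) s ->
  sorted_elems [set i : 'I_k | val i \in s] = s.
Proof.
move=> ss lt_s; rewrite /sorted_elems.
have s_perm : perm_eq [seq val x | x <- enum [set i : 'I_k | val i \in s]] s.
  apply: uniq_perm.
  - by rewrite map_inj_uniq ?enum_uniq //; exact: val_inj.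
  - by move: ss; rewrite ltn_sorted_uniq_leq => /andP[].
  move=> x; apply/mapP/idP => [[i]|xs]; first by rewrite mem_enum inE => ? ->.
  by exists (Ordinal (allP lt_s x xs)); rewrite // mem_enum inE.
rewrite (perm_sortP leq_total leq_trans anti_leq _ _ s_perm).
by apply: sorted_sort; [exact: leq_trans | apply: sub_sorted ss; exact: ltnW].
Qed.

Lemma big_set_subseqs (R : nmodType) (F : seq nat -> R) :
  (\sum_(S : {set 'I_k}) F (sorted_elems S) = \sum_(s <- subseqs (iota 0 k)) F s)%R.
Proof.
rewrite -(big_map (@sorted_elems k) xpredT); apply: perm_big.
apply: uniq_perm.
- by rewrite map_inj_uniq ?index_enum_uniq //; exact: sorted_elems_inj.
- exact: uniq_subseqs_iota.
move=> s; rewrite mem_subseqs_iota; apply/mapP/andP => [[S _ ->]|[ss lt_s]].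
  split; first exact: sorted_elems_ltn.
  by apply/allP => x; rewrite /sorted_elems mem_sort => /mapP[i _ ->]; rewrite /= ltn_ord.
exists [set i : 'I_k | val i \in s]; first by rewrite mem_index_enum.
by rewrite sorted_elems_of_seq //; apply: sub_all lt_s => x /andP[].
Qed.

End SortedElems.

Lemma exchange_big_nat_sub (R : nmodType) (F : nat -> nat -> R) k :
  (\sum_(c < k) \sum_(1 <= h < c.+1) F h (c - h)%N =
   \sum_(1 <= h < k.+1) \sum_(c < k - h) F h c)%R.
Proof.
elim: k => [|k IH]; first by rewrite big_ord0 big_geq.
rewrite big_ord_recr /= IH (big_nat_recr k.+1) //= subnn big_ord0 addr0.
rewrite -big_split /=; apply: eq_big_nat => h /andP[h1 h2].
by rewrite subSn // big_ord_recr.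
Qed.

Local Open Scope ring_scope.

Section CyclicGapSum.
Variables (R : comRingType) (y : R) (g : nat -> R).

Fixpoint path_weight (h : nat) (t : seq nat) : R :=
  if t is x :: t' then g (x - h) * path_weight x t' else 1.

Definition cycle_weight k h t := path_weight h t * g (k + h - last h t).

Definition cyclic_sum k :=
  \sum_(S : {set 'I_k} | S != set0) y ^+ #|S| * \prod_(i < #|S|) g (gap S i).

(* the cycles of length [K] through [0] all of whose other points lie in [1, c] *)
Definition rooted_sum K c :=
  \sum_(t <- subseqs (iota 1 c)) y ^+ (size t).+1 * cycle_weight K 0 t.

Lemma path_weightE h t :
  \prod_(i < size t) g (nth 0 t i - nth 0 (h :: t) i) = path_weight h t.
Proof. by elim: t h => [|x t IH] h /=; rewrite ?big_ord0 // big_ord_recl /= IH. Qed.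

Lemma prod_gap k (S : {set 'I_k}) h t : sorted_elems S = h :: t ->
  \prod_(i < #|S|) g (gap S i) = cycle_weight k h t.
Proof.
move=> eS; rewrite /cycle_weight -path_weightE -size_sorted_elems eS big_ord_recr /=.
congr (_ * _); first by apply: eq_bigr => i _; rewrite /gap eS /= ltnS ltn_ord.
by rewrite /gap eS /= ltnn (nth_last 0 (h :: t)).
Qed.

Lemma path_weight_shift c h t :
  path_weight (c + h) (map (addn c) t) = path_weight h t.
Proof. by elim: t h => [//|x t IH] h /=; rewrite subnDl IH. Qed.

Lemma cycle_weight_shift k c h t :
  cycle_weight k (c + h) (map (addn c) t) = cycle_weight k h t.
Proof. by rewrite /cycle_weight path_weight_shift last_map addnCA subnDl. Qed.

Lemma cyclic_sum_rooted k : cyclic_sum k = \sum_(c < k) rooted_sum k c.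
Proof.
pose F s := if s is h :: t then y ^+ (size t).+1 * cycle_weight k h t else 0.
transitivity (\sum_(S : {set 'I_k}) F (sorted_elems S)).
  rewrite /cyclic_sum big_mkcond; apply: eq_bigr => S _.
  case eS: (sorted_elems S) => [|h t] /=.
    suff -> : S = set0 by rewrite eqxx.
    by apply/eqP; rewrite -cards_eq0 -size_sorted_elems eS.
  have -> : S != set0 by rewrite -cards_eq0 -size_sorted_elems eS.
  by rewrite (prod_gap eS) -size_sorted_elems eS.
rewrite big_set_subseqs big_subseqs_iota add0r -(big_mkord xpredT) big_nat_rev.
rewrite /index_iota subn0; apply: eq_bigr => h _.
rewrite add0n -addn1 iotaDl subseqs_map big_map; apply: eq_bigr => t _.
by rewrite /= size_map -{1}(addn0 h) cycle_weight_shift.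
Qed.

Lemma rooted_sum_rec K c :
  rooted_sum K c = y * g K + \sum_(1 <= h < c.+1) y * g h * rooted_sum (K - h) (c - h).
Proof.
rewrite {1}/rooted_sum big_subseqs_iota /cycle_weight /= addn0 subn0.
rewrite expr1 mul1r; congr (_ + _).
rewrite /index_iota subn1 /=; apply: eq_bigr => h _.
rewrite add1n subSS -addn1 iotaDl subseqs_map big_map /rooted_sum mulr_sumr.
apply: eq_bigr => t _; rewrite /= size_map subn0.
have := path_weight_shift h 0 t; have := last_map (addn h) t 0; rewrite addn0 => -> ->.
by rewrite /cycle_weight addn0 subnDA exprS; ring.
Qed.

Lemma cyclic_sum_rec k :
  cyclic_sum k = y * (g k *+ k) + y * \sum_(1 <= h < k.+1) g h * cyclic_sum (k - h).
Proof.
rewrite cyclic_sum_rooted; under eq_bigr do rewrite rooted_sum_rec.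
rewrite big_split /= sumr_const card_ord -mulrnAr; congr (_ + _).
rewrite (exchange_big_nat_sub (fun h c => y * g h * rooted_sum (k - h) c)) mulr_sumr.
apply: eq_bigr => h _; rewrite cyclic_sum_rooted !mulr_sumr.
by apply: eq_bigr => c _; rewrite mulrA.
Qed.

End CyclicGapSum.

Lemma coef_sum_XnM (R : ringType) (I : finType) (P : pred I) (n : I -> nat)
    (c : I -> R) j :
  (\sum_(i | P i) 'X^(n i) * (c i)%:P)`_j = \sum_(i | P i && (n i == j)) c i.
Proof.
rewrite coef_sum big_mkcondr /=; apply: eq_bigr => i _.
by rewrite -commr_polyXn coefCM coefXn mulr_natr mulrb eq_sym.
Qed.

Lemma coef_prod_addXM (R : comRingType) (I : finType) (a b : I -> R) m :
  (\prod_i ((a i)%:P + 'X * (b i)%:P))`_m =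
  \sum_(A : {set I} | #|A| == m) \prod_i (if i \in A then b i else a i).
Proof.
have -> : \prod_i ((a i)%:P + 'X * (b i)%:P) =
    \sum_(A : {set I}) 'X^#|A| * (\prod_i if i \in A then b i else a i)%:P.
  rewrite (eq_bigr _ (fun i _ => addrC _ _)) bigA_distr big_mkcond.
  apply: eq_bigr => A _ /=; rewrite rmorph_prod -sum1_card -prodrXr.
  rewrite [\prod_(i in A) _]big_mkcond -big_split /=.
  by apply: eq_bigr => i _; case: (i \in A); rewrite ?expr1 ?expr0 ?mul1r.
by rewrite coef_sum_XnM.
Qed.

(* Z[w][z][y] and Z[w][z][y][x] *)
Local Notation Ry := {poly {poly {poly int}}}.
Local Notation Rx := {poly Ry}.

Definition gap_weight (p : nat) : {poly {poly int}} :=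
  (factor p false)%:P + 'X * (factor p true)%:P.

Definition cycle_poly k : Ry := cyclic_sum 'X (fun p => (gap_weight p)%:P) k.

Lemma coef_cycle_poly k j a : (cycle_poly k)`_j`_a = q k j a.
Proof.
rewrite /cycle_poly /cyclic_sum; under eq_bigr do rewrite -rmorph_prod.
rewrite coef_sum_XnM /q; have [->|j0] := eqVneq j 0%N.
  by rewrite big_pred0 ?coef0 // => S; rewrite cards_eq0 andNb.
rewrite coef_sum; apply: eq_big => [S|S /andP[_ /eqP eS]].
  by apply/andb_idl => /eqP eS; rewrite -cards_eq0 eS.
rewrite eS coef_prod_addXM; apply: eq_bigr => A _.
by apply: eq_bigr => i _; case: (i \in A).
Qed.

Lemma q_eq0_ltkj k j a : (k < j)%N -> q k j a = 0.
Proof.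
move=> lt_kj; rewrite /q; case: eqP => // _; rewrite big_pred0 // => S.
by apply/negbTE; rewrite neq_ltn (leq_ltn_trans (max_card _)) ?card_ord ?orbT.
Qed.

Lemma q_eq0_ltja k j a : (j < a)%N -> q k j a = 0.
Proof.
move=> lt_ja; rewrite /q; case: eqP => // _; rewrite big1 // => S _.
rewrite big_pred0 // => A.
by apply/negbTE; rewrite neq_ltn (leq_ltn_trans (max_card _)) ?card_ord ?orbT.
Qed.

Lemma QserE k j a : Qser k j a = q k j a.
Proof.
rewrite /Qser; have [/q_eq0_ltkj->|le_jk] := ltnP k j; first by rewrite if_same.
have [/q_eq0_ltja->|_] := ltnP j a; first by rewrite if_same.
by case: k le_jk => [|k] //; rewrite leqn0 => /eqP ->.
Qed.

Definition alt_geom (p : nat) : {poly int} := \sum_(b < p) (-1) ^+ (p - 1 - b) * 'X^b.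

Lemma alt_geomS p : alt_geom p.+1 = 'X^p - alt_geom p.
Proof.
rewrite /alt_geom big_ord_recr /= subn1 subnn mul1r addrC -sumrN; congr (_ + _).
apply: eq_bigr => i _; have -> : (p - i = (p - 1 - i).+1)%N by have := ltn_ord i; lia.
by rewrite exprS mulN1r mulNr.
Qed.

Lemma alt_geom0 : alt_geom 0 = 0.
Proof. by rewrite /alt_geom big_ord0. Qed.

Lemma alt_geom1 : alt_geom 1 = 1.
Proof. by rewrite alt_geomS alt_geom0 subr0. Qed.

Lemma gap_weightE p : gap_weight p = (1 + 'X) * (alt_geom p)%:P + (-1) ^+ p.
Proof.
rewrite /gap_weight /factor /= mulr1 mulr0 addr0 -/(alt_geom p).
by rewrite rmorphD rmorphXn rmorphN1; ring.
Qed.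

Lemma gap_weight0 : gap_weight 0 = 1.
Proof. by rewrite gap_weightE alt_geom0 mulr0 add0r. Qed.

Lemma gap_weight1 : gap_weight 1 = 'X.
Proof. by rewrite gap_weightE alt_geom1 polyC1 mulr1 expr1 addrAC subrr add0r. Qed.

Lemma gap_weightSS p :
  gap_weight p.+2 = ('X%:P - 1) * gap_weight p.+1 + 'X%:P * gap_weight p.
Proof. by rewrite !gap_weightE !alt_geomS !rmorphB !rmorphXn /= !exprS; ring. Qed.

Section LowCoefficients.
Variable R : comRingType.
Implicit Types P Q : {poly R}.

Definition low_coef0 N P := forall k, (k <= N)%N -> P`_k = 0.

Lemma low_coef0D N P Q : low_coef0 N P -> low_coef0 N Q -> low_coef0 N (P + Q).
Proof. by move=> P0 Q0 k le_kN; rewrite coefD P0 // Q0 // addr0. Qed.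

Lemma low_coef0N N P : low_coef0 N P -> low_coef0 N (- P).
Proof. by move=> P0 k le_kN; rewrite coefN P0 // oppr0. Qed.

Lemma low_coef0Ml N P Q : low_coef0 N Q -> low_coef0 N (P * Q).
Proof.
move=> Q0 k le_kN; rewrite coefM big1 // => i _.
by rewrite Q0 ?mulr0 // (leq_trans (leq_subr _ _)).
Qed.

Definition xderiv P := 'X * P^`().

Lemma coef_xderiv P k : (xderiv P)`_k = P`_k *+ k.
Proof. by rewrite /xderiv coefXM; case: k => [|k] //=; rewrite coef_deriv. Qed.

Lemma low_coef0_xderiv N P : low_coef0 N P -> low_coef0 N (xderiv P).
Proof. by move=> P0 k le_kN; rewrite coef_xderiv P0 // mul0rn. Qed.

Lemma xderivM P Q : xderiv (P * Q) = xderiv P * Q + P * xderiv Q.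
Proof. by rewrite /xderiv derivM; ring. Qed.

Lemma xderivB P Q : xderiv (P - Q) = xderiv P - xderiv Q.
Proof. by rewrite /xderiv derivB; ring. Qed.

End LowCoefficients.

Definition gap_coef p : Ry := if p is 0 then 0 else (gap_weight p)%:P.

Definition varW : Rx := ((('X : {poly int})%:P)%:P)%:P.
Definition varZ : Rx := (('X : {poly {poly int}})%:P)%:P.
Definition varY : Rx := ('X : Ry)%:P.
Definition gap_den : Rx := 1 + (1 - varW) * 'X - varW * 'X^2.
Definition gap_num : Rx := 'X * (varZ + varW * 'X).

Definition gap_series N : Rx := \poly_(p < N.+1) gap_coef p.
Definition cycle_series N : Rx := \poly_(k < N.+1) cycle_poly k.

Lemma gap_series_fraction N : low_coef0 N (gap_series N * gap_den - gap_num).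
Proof.
move=> k le_kN.
have -> : gap_series N * gap_den - gap_num =
    gap_series N + (1 - varW) * ('X * gap_series N) - varW * ('X^2 * gap_series N)
    - ('X * varZ + 'X^2 * varW) by rewrite /gap_den /gap_num; ring.
rewrite !coefB !coefD /varW /varZ -!polyCB !coefCM !coefXM !coefXnM !coef_poly.
have lt1 : (k.-1 < N.+1)%N by lia.
have lt2 : (k - 2 < N.+1)%N by lia.
rewrite ltnS le_kN lt1 lt2.
have gSS p : (gap_weight p.+2)%:P = ('X%:P - 1)%:P * (gap_weight p.+1)%:P
    + ('X%:P)%:P * (gap_weight p)%:P :> Ry.
  by rewrite gap_weightSS rmorphD !rmorphM.
case: k {le_kN lt1 lt2} => [|[|[|k]]] /=; rewrite ?coefC /=.
- ring.
- by rewrite gap_weight1; ring.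
- by rewrite gSS gap_weight1 gap_weight0; ring.
by rewrite subSS subn1 /= gSS; ring.
Qed.

Lemma cycle_polyE k :
  cycle_poly k = 'X * (gap_coef k *+ k) + 'X * \sum_(i < k.+1) gap_coef i * cycle_poly (k - i).
Proof.
rewrite {1}/cycle_poly cyclic_sum_rec.
rewrite -(big_mkord xpredT (fun i => gap_coef i * cycle_poly (k - i))) big_ltn //= mul0r add0r.
congr (_ * _ + _ * _); first by case: k.
by apply: eq_big_nat => h /andP[h_gt0 _]; case: h h_gt0.
Qed.

Lemma cycle_series_recursion N :
  low_coef0 N (cycle_series N * (1 - varY * gap_series N) - varY * xderiv (gap_series N)).
Proof.
move=> k le_kN.
have -> : cycle_series N * (1 - varY * gap_series N) - varY * xderiv (gap_series N)
   = cycle_series N - varY * (gap_series N * cycle_series N) - varY * xderiv (gap_series N).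
  by ring.
rewrite !coefB /varY !coefCM coef_xderiv coefM !coef_poly ltnS le_kN [cycle_poly k]cycle_polyE.
have -> : \sum_(i < k.+1) (gap_series N)`_i * (cycle_series N)`_(k - i)
   = \sum_(i < k.+1) gap_coef i * cycle_poly (k - i).
  apply: eq_bigr => i _; rewrite !coef_poly !ifT //; have := ltn_ord i; lia.
ring.
Qed.

Definition num_poly : Rx :=
  'X * varY * (- (varW * varW * 'X * 'X) + varW * 'X * 'X * varZ + varW * 'X * 'X
               + (varW + varW) * 'X + varZ).

Definition den_poly : Rx :=
  (varW * 'X * 'X * varY + varW * 'X * 'X + 'X * varY * varZ + varW * 'X - 'X - 1)
  * (varW * 'X - 1) * ('X + 1).

Lemma cycle_series_fraction N : low_coef0 N (cycle_series N * den_poly - num_poly).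
Proof.
set G := gap_series N; set T := cycle_series N.
have Dh : xderiv gap_den = (1 - varW) * 'X - (varW *+ 2) * 'X^2.
  rewrite /xderiv /gap_den /varW.
  by rewrite !(derivD, derivB, derivM, derivC, derivX, derivXn, derivN) /=; ring.
have Du : xderiv gap_num = varZ * 'X + (varW *+ 2) * 'X^2.
  by rewrite /xderiv /gap_num /varW /varZ !(derivD, derivM, derivC, derivX) /=; ring.
(* [T * den - num] is a combination of the defects of the two identities
   [G * gap_den = gap_num] and [T * (1 - y G) = y * xderiv G]. *)
set E := G * gap_den - gap_num.
have -> : T * den_poly - num_poly =
    gap_den ^+ 2 * (T * (1 - varY * G) - varY * xderiv G) + (varY * T * gap_den) * E
    + varY * (gap_den * xderiv E - xderiv gap_den * E).
  by rewrite /E xderivB xderivM Dh Du /den_poly /num_poly /gap_den /gap_num; ring.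
have E0 : low_coef0 N E := @gap_series_fraction N.
apply: low_coef0D; first apply: low_coef0D.
- exact/low_coef0Ml/cycle_series_recursion.
- exact: low_coef0Ml.
apply/low_coef0Ml/low_coef0D; first exact/low_coef0Ml/low_coef0_xderiv.
exact/low_coef0N/low_coef0Ml.
Qed.

Definition fps_approx N (f : fps) (P : Rx) :=
  forall k j a, (k <= N)%N -> f k j a = P`_k`_j`_a.

Section FpsApprox.
Variable N : nat.

Lemma fps_approxD f g P Q :
  fps_approx N f P -> fps_approx N g Q -> fps_approx N (f + g)%F (P + Q).
Proof. by move=> fP gQ k j a le_kN; rewrite /fps_add fP // gQ // !coefD. Qed.

Lemma fps_approxN f P : fps_approx N f P -> fps_approx N (- f)%F (- P).
Proof. by move=> fP k j a le_kN; rewrite /fps_opp fP // !coefN. Qed.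

Lemma fps_approxM f g P Q :
  fps_approx N f P -> fps_approx N g Q -> fps_approx N (f * g)%F (P * Q).
Proof.
move=> fP gQ k j a le_kN; rewrite /fps_mul coefM !coef_sum; apply: eq_bigr => i _.
rewrite coefM coef_sum; apply: eq_bigr => l _; rewrite coefM; apply: eq_bigr => m _.
by rewrite fP ?gQ // ?(leq_trans (leq_subr _ _)) // -ltnS (leq_trans (ltn_ord i)).
Qed.

Lemma fps_approx_mon c k0 j0 a0 :
  fps_approx N (fps_mon c k0 j0 a0) (((c%:P * 'X^a0)%:P * 'X^j0)%:P * 'X^k0).
Proof.
move=> k j a _; rewrite /fps_mon !(coefCM, coefXn, mulr_natr, coefMn).
by case: (k == k0); case: (j == j0); case: (a == a0).
Qed.

Lemma fps_approx1 : fps_approx N fps1 1.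
Proof. by have := fps_approx_mon 1 0 0 0; rewrite !expr0 !mulr1 !polyC1. Qed.

Lemma fps_approxW : fps_approx N fpsW varW.
Proof. by have := fps_approx_mon 'X 0 0 0; rewrite !expr0 !mulr1. Qed.

Lemma fps_approxX : fps_approx N fpsX 'X.
Proof. by have := fps_approx_mon 1 1 0 0; rewrite !expr0 expr1 !mulr1 !polyC1 mul1r. Qed.

Lemma fps_approxY : fps_approx N fpsY varY.
Proof. by have := fps_approx_mon 1 0 1 0; rewrite !expr0 expr1 !mulr1 polyC1 mul1r. Qed.

Lemma fps_approxZ : fps_approx N fpsZ varZ.
Proof. by have := fps_approx_mon 1 0 0 1; rewrite !expr0 expr1 !mulr1 mul1r. Qed.

Ltac fps_approx_tac :=
  repeat match goal with
  | |- fps_approx _ (fps_add _ _) _ => refine (fps_approxD _ _)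
  | |- fps_approx _ (fps_mul _ _) _ => refine (fps_approxM _ _)
  | |- fps_approx _ (fps_opp _) _ => refine (fps_approxN _)
  | |- fps_approx _ fps1 _ => exact: fps_approx1
  | |- fps_approx _ fpsW _ => exact: fps_approxW
  | |- fps_approx _ fpsX _ => exact: fps_approxX
  | |- fps_approx _ fpsY _ => exact: fps_approxY
  | |- fps_approx _ fpsZ _ => exact: fps_approxZ
  end.

Lemma fps_approx_Numer : fps_approx N Numer num_poly.
Proof. by rewrite /Numer /num_poly; fps_approx_tac. Qed.

Lemma fps_approx_Denom : fps_approx N Denom den_poly.
Proof. by rewrite /Denom /den_poly; fps_approx_tac. Qed.

Lemma fps_approx_Qser : fps_approx N Qser (cycle_series N).
Proof. by move=> k j a le_kN; rewrite QserE coef_poly ltnS le_kN coef_cycle_poly. Qed.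

End FpsApprox.

Theorem propositionB5 :
  forall k j a : nat, fps_mul Qser Denom k j a = Numer k j a.
Proof.
move=> k j a.
rewrite (fps_approxM (@fps_approx_Qser k) (@fps_approx_Denom k)) // (@fps_approx_Numer k) //.
have := @cycle_series_fraction k k (leqnn k).
by rewrite coefB => /eqP; rewrite subr_eq0 => /eqP ->.
Qed.
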